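(* For every integer $d\ge 1$, the class of finite unit ball graphs in $\mathbb{R}^d$ has asymptotic dimension at most $d$.
   Context: A unit ball graph in $\mathbb{R}^d$ is a graph whose vertices can be mapped to points of $\mathbb{R}^d$ such that two vertices are adjacent if and only if the corresponding points are at Euclidean distance at most $1$. Graphs are metric spaces with the shortest-path distance. For a metric space $(X,d)$, a family $\mathcal U$ of subsets is $D$-bounded if every member has diameter at most $D$, and $r$-disjoint if points in different members are at distance $>r$. A function $D:\mathbb{R}^+\to\mathbb{R}^+$ is an $n$-dimensional control function for $X$ if for every $r>0$ there is a cover $\mathcal U=\mathcal U_1\cup\dots\cup\mathcal U_{n+1}$ of $X$ with each $\mathcal U_i$ $r$-disjoint and each member $D(r)$-bounded; a class has asymptotic dimension at most $n$ if one such function works for all its members. *)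

From HB Require Import structures.
From mathcomp Require Import all_boot all_order all_algebra.
From mathcomp Require Import reals.
Set Implicit Arguments. Unset Strict Implicit. Unset Printing Implicit Defensive.
Import Order.TTheory GRing.Theory Num.Theory.
Local Open Scope ring_scope.

Definition eucl_dist (R : realType) (d : nat) (p q : 'rV[R]_d) : R :=
  Num.sqrt (\sum_(i < d) (p ord0 i - q ord0 i) ^+ 2).

Definition unit_ball_graph (R : realType) (d : nat) (T : finType) (e : rel T) :=
  exists f : T -> 'rV[R]_d,
    forall x y : T, x != y -> (e x y <-> eucl_dist (f x) (f y) <= 1).

(* Shortest-path distance, encoded by: "dist(x,y) <= k" iff there is a
   walk of at most k edges from x to y. (Distance is +oo between different
   components.) *)
Definition gdist_le (T : finType) (e : rel T) (x y : T) (k : nat) : Prop :=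
  exists p : seq T, [/\ path e x p, last x p = y & (size p <= k)%N].

Definition gdist_leR (R : realType) (T : finType) (e : rel T) (x y : T) (r : R) : Prop :=
  exists k : nat, k%:R <= r /\ gdist_le e x y k.

Definition bounded_family (R : realType) (T : finType) (e : rel T)
    (F : {set {set T}}) (D : R) : Prop :=
  forall U, U \in F -> forall x y, x \in U -> y \in U -> gdist_leR e x y D.

Definition disjoint_family (R : realType) (T : finType) (e : rel T)
    (F : {set {set T}}) (r : R) : Prop :=
  forall U V, U \in F -> V \in F -> U != V ->
    forall x y, x \in U -> y \in V -> ~ gdist_leR e x y r.

Definition control_function (R : realType) (n : nat) (T : finType) (e : rel T)
    (D : R -> R) : Prop :=
  forall r : R, 0 < r ->
    exists F : 'I_n.+1 -> {set {set T}},
      [/\ forall x : T, exists i : 'I_n.+1, exists2 U, U \in F i & x \in U,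
          forall i, disjoint_family e (F i) r
        & forall i, bounded_family e (F i) (D r)].

From mathcomp Require Import all_boot all_order all_algebra.
From mathcomp Require Import reals boolp zify ring lra.
Set Implicit Arguments. Unset Strict Implicit. Unset Printing Implicit Defensive.
Import Order.TTheory GRing.Theory Num.Theory.
Local Open Scope ring_scope.

(* Given r, put N = floor r + 1 and cut R^d into cubes of side L = 4N(d + 1),
   in d + 1 copies translated by k 4N, k = 0..d.  The walls of the shifted
   grids are 4N apart modulo L, so each coordinate of a point lies within N of
   the walls of at most one grid, and every point is away from the walls of
   some grid k.  The k-th family consists of the components of the relation
   "both away from grid k and at graph distance <= N"; they are r-disjoint by
   construction.  A walk of length <= N moves each coordinate by <= N, so a
   component stays in one cube; vertices in the same cell of side 1/d of that
   cube are adjacent, and shortcutting walks through repeated cells bounds the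
   diameter of a component by (number of cells) * (N + 1). *)

Section Walks.
Variables (T : finType) (e : rel T).

Lemma gdist_leW x y m n : gdist_le e x y m -> (m <= n)%N -> gdist_le e x y n.
Proof.
by move=> [p [x_p <- size_p]] le_mn; exists p; split=> //; apply: leq_trans le_mn.
Qed.

Lemma gdist_le_refl x : gdist_le e x x 0.
Proof. by exists [::]. Qed.

Lemma gdist_le_edge x y : e x y -> gdist_le e x y 1.
Proof. by move=> xy; exists [:: y]; rewrite /= xy. Qed.

Lemma gdist_le_trans x y z m n :
  gdist_le e x y m -> gdist_le e y z n -> gdist_le e x z (m + n).
Proof.
move=> [p [x_p <- size_p]] [q [y_q <- size_q]]; exists (p ++ q).
by rewrite cat_path last_cat x_p y_q size_cat leq_add.
Qed.

Lemma gdist_le_sym x y n : symmetric e -> gdist_le e x y n -> gdist_le e y x n.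
Proof.
move=> e_sym [p [x_p <- size_p]]; exists (rev (belast x p)); split.
- by rewrite rev_path; apply: sub_path x_p => a b /=; rewrite e_sym.
- by case: p {x_p size_p} => [|z p] //=; rewrite rev_cons last_rcons.
- by rewrite size_rev size_belast.
Qed.

End Walks.

Lemma has_split_last (A : Type) (a : pred A) (s : seq A) : has a s ->
  exists s1 x s2, [/\ s = s1 ++ x :: s2, a x & ~~ has a s2].
Proof.
elim: s => [|y s IHs] //=; case s_a: (has a s); rewrite ?orbT ?orbF => y_a.
  by case: (IHs s_a) => s1 [x [s2 [-> x_a s2_a]]]; exists (y :: s1), x, s2.
by exists [::], y, s; rewrite s_a.
Qed.

Section LabelledWalks.
Variables (T : finType) (e rl : rel T) (N : nat) (C : finType) (lab : T -> C).
Variables (P : pred T).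
Hypothesis rl_le : forall x y, rl x y -> gdist_le e x y N.
Hypothesis lab_le : forall x y, P x -> P y -> lab x = lab y -> gdist_le e x y 1.

(* Jump from x to the last vertex z of the walk carrying the label of x, take
   one more step, and recurse on the remaining walk, which misses that label. *)
Lemma gdist_le_labels n x p : path rl x p -> all P (x :: p) ->
  (#|[set lab z | z in (x :: p)]| <= n)%N -> gdist_le e x (last x p) (n * N.+1).
Proof.
elim: n x p => [|n IHn] x p x_p P_xp card_p.
  have : lab x \in [set lab z | z in (x :: p)] by rewrite imset_f ?mem_head.
  by move: card_p; rewrite leqn0 cards_eq0 => /eqP ->; rewrite inE.
have xp_lab_x : has (fun z => lab z == lab x) (x :: p) by rewrite /= eqxx.
have [s1 [z [s2 [def_xp /eqP lab_z no_lab_x]]]] := has_split_last xp_lab_x.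
have xp_z : z \in x :: p by rewrite def_xp mem_cat mem_head orbT.
have x_z : gdist_le e x z 1.
  by apply: lab_le => //; [exact: (allP P_xp) (mem_head _ _) | exact: (allP P_xp)].
have [z_s2 last_z] : path rl z s2 /\ last x p = last z s2.
  have : sorted rl (s1 ++ z :: s2) by rewrite -def_xp.
  case/cat_sorted2=> _ z_s2; split=> //.
  by rewrite -[last x p]/(last x (x :: p)) def_xp last_cat.
rewrite last_z; case: s2 => [|y s3] in def_xp no_lab_x z_s2 last_z *.
  by apply: gdist_leW x_z _; rewrite mulSn leq_addr.
case/andP: z_s2 => z_y y_s3.
have xp_sub w : w \in y :: s3 -> w \in x :: p.
  by move=> w_in; rewrite def_xp mem_cat inE w_in !orbT.
have y_last : gdist_le e y (last y s3) (n * N.+1).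
  apply: IHn => //; first by apply/allP=> w /xp_sub; apply: (allP P_xp).
  have lab_x_in : lab x \in [set lab z | z in (x :: p)] by rewrite imset_f ?mem_head.
  move: card_p; rewrite (cardsD1 (lab x)) lab_x_in add1n ltnS; apply: leq_trans.
  apply/subset_leq_card/subsetP=> _ /imsetP [w w_in ->].
  rewrite !inE imset_f ?xp_sub // andbT.
  by apply: contra no_lab_x => /eqP lab_w; apply/hasP; exists w; rewrite ?lab_w.
apply: gdist_leW (gdist_le_trans (gdist_le_trans x_z (rl_le z_y)) y_last) _.
by rewrite mulSn add1n addSn.
Qed.

End LabelledWalks.

Section NearComponents.
Variables (T : finType) (e : rel T) (I : finType) (good : I -> pred T) (N : nat).
Hypothesis e_sym : symmetric e.

Definition near k : rel T :=
  fun x y => [&& good k x, good k y & `[< gdist_le e x y N >]].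

Definition near_components k : {set {set T}} :=
  [set [set y | connect (near k) x y] | x in good k].

Lemma near_sym k : symmetric (near k).
Proof.
move=> x y; rewrite /near andbCA; congr (_ && (_ && _)).
by apply/asboolP/asboolP => /(gdist_le_sym e_sym).
Qed.

Let near_csym k : connect_sym (near k) := sym_connect_sym (near_sym k).

Lemma connect_near_good k x y : good k x -> connect (near k) x y -> good k y.
Proof.
have near_closed : closed (near k) (good k).
  by move=> a b /and3P [a_good b_good _]; rewrite -!topredE /= a_good b_good.
by move=> x_good /(closed_connect near_closed); rewrite -!topredE /= x_good.
Qed.

Lemma near_components_cover : (forall x, exists k, good k x) ->
  forall x, exists k, exists2 U, U \in near_components k & x \in U.
Proof.
move=> good_cover x; have [k x_good] := good_cover x.
by exists k, [set y | connect (near k) x y]; rewrite ?imset_f ?inE.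
Qed.

Lemma near_components_disjoint (R : realType) k (r : R) :
  (forall m : nat, m%:R <= r -> (m <= N)%N) -> disjoint_family e (near_components k) r.
Proof.
move=> r_le U V /imsetP [x1 x1_good ->] /imsetP [x2 x2_good ->] neqUV x y.
rewrite !inE => x1_x x2_y [m [m_le_r x_y]]; apply/negP: neqUV; apply/negPn.
have xy_near : near k x y.
  apply/and3P; split; [exact: connect_near_good x1_x | exact: connect_near_good x2_y |].
  by apply/asboolP; apply: gdist_leW x_y (r_le m m_le_r).
have x1_x2 : connect (near k) x1 x2.
  apply: connect_trans x1_x (connect_trans (connect1 xy_near) _).
  by rewrite near_csym.
by apply/eqP/setP => w; rewrite !inE (same_connect (near_csym k) x1_x2).
Qed.

Lemma near_components_bounded (R : realType) (C : finType) (lab : T -> C) k :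
  (forall x y, connect (near k) x y -> lab x = lab y -> gdist_le e x y 1) ->
  bounded_family e (near_components k) ((#|C| * N.+1)%:R : R).
Proof.
move=> lab_le _ /imsetP [x0 _ ->] x y; rewrite !inE => x0_x x0_y.
have /connectP [p x_p ->] : connect (near k) x y.
  by rewrite -(same_connect (near_csym k) x0_x).
exists (#|C| * N.+1)%N; split=> //.
apply: (@gdist_le_labels _ _ (near k) _ _ lab (connect (near k) x)) => //.
- by move=> a b /and3P [_ _ /asboolP].
- by move=> a b x_a x_b; apply: lab_le; rewrite -(same_connect (near_csym k) x_a).
- by apply/allP; apply: path_connect.
- exact: max_card.
Qed.

End NearComponents.

Lemma floor_eq_dist_lt1 (R : realType) (x y : R) :
  Num.floor x = Num.floor y -> `|x - y| < 1.
Proof.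
move=> floor_xy; have /andP [x_ge x_lt] := floor_itv x.
have /andP [y_ge y_lt] := floor_itv y.
by move: x_ge x_lt; rewrite floor_xy intrD ltr_norml => *; apply/andP; split; lra.
Qed.

Section EuclideanDistance.
Variables (R : realType) (d : nat).
Implicit Types p q : 'rV[R]_d.

Lemma eucl_distC p q : eucl_dist p q = eucl_dist q p.
Proof. by congr Num.sqrt; apply: eq_bigr => i _; rewrite -sqrrN opprB. Qed.

Lemma coord_le_eucl_dist p q i : `|p ord0 i - q ord0 i| <= eucl_dist p q.
Proof.
rewrite /eucl_dist -sqrtr_sqr ler_wsqrtr // (bigD1 i) //= lerDl.
by apply: sumr_ge0 => j _; apply: sqr_ge0.
Qed.

(* The cube of side [1/d] has Euclidean diameter [1/sqrt d <= 1]. *)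
Lemma eucl_dist_le1 p q :
  (forall i, d%:R * `|p ord0 i - q ord0 i| < 1) -> eucl_dist p q <= 1.
Proof.
move=> close_pq; rewrite /eucl_dist -sqrtr1 ler_wsqrtr //.
case: d p q close_pq => [|d'] p q close_pq; first by rewrite big_ord0 ler01.
rewrite -(ler_pM2l (ltr0Sn _ d')) mulr1 mulr_sumr.
apply: le_trans (_ : \sum_(i < d'.+1) (1 : R) <= _); last by rewrite sumr_const card_ord.
apply: ler_sum => i _; have := close_pq i.
have d_ge1 : 1 <= d'.+1%:R :> R by rewrite ler1n.
rewrite -real_normK ?num_real //.
have := normr_ge0 (p ord0 i - q ord0 i); nra.
Qed.

End EuclideanDistance.

Section CubeLattice.
Variables (R : realType) (d N : nat).
Hypothesis N_gt0 : (0 < N)%N.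
Implicit Types (k : 'I_d.+1) (p q : 'rV[R]_d).

Definition period := (d.+1 * (4 * N))%N.

Definition shift (k : 'I_d.+1) (p : 'rV[R]_d) i : R := p ord0 i + (k * (4 * N))%:R.

Definition near_wall k p i := exists j : int, `|shift k p i - j%:~R * period%:R| < N%:R.

Definition away k p := forall i, ~ near_wall k p i.

Definition block k p : {ffun 'I_d -> int} :=
  [ffun i => Num.floor (shift k p i / period%:R)].

(* Cells of side [1/d], numbered relative to their cube so that [cell] takes
   finitely many values. *)
Definition cell k p : {ffun 'I_d -> 'I_(d * period).+1} :=
  [ffun i => inord (absz
    (Num.floor (d%:R * shift k p i) - (d * period)%:Z * block k p i)%R)].

Let period_gt0 : 0 < period%:R :> R.
Proof. by rewrite ltr0n muln_gt0 /= muln_gt0. Qed.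

Lemma block_bounds k p i :
  (block k p i)%:~R * period%:R <= shift k p i < (block k p i + 1)%:~R * period%:R.
Proof. by rewrite ffunE -ler_pdivlMr // -ltr_pdivrMr //; apply: floor_itv. Qed.

Lemma block_le k p q i : away k q -> `|p ord0 i - q ord0 i| <= N%:R ->
  block k q i <= block k p i.
Proof.
move=> q_away pq_le; rewrite leNgt; apply/negP => lt_pq.
apply: (q_away i); exists (block k q i).
have : (block k p i + 1)%:~R <= (block k q i)%:~R :> R by rewrite ler_int lezD1.
move=> /(ler_wpM2r (ltW period_gt0)).
move: (block_bounds k p i) (block_bounds k q i) pq_le.
rewrite /shift ler_norml ltr_norml => /andP [? ?] /andP [? ?] /andP [? ?] ?.
by apply/andP; split; lra.
Qed.

Lemma block_eq k p q : away k p -> away k q ->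
  (forall i, `|p ord0 i - q ord0 i| <= N%:R) -> block k p = block k q.
Proof.
move=> p_away q_away pq_le; apply/ffunP => i; apply/eqP; rewrite eq_le.
by apply/andP; split; apply: block_le => //; rewrite distrC.
Qed.

(* Two shifts differ by [(k - k') 4N], while two points within [N] of the
   lattice [period Z] differ by less than [2N] from a multiple of [period]. *)
Lemma near_wall_uniq k k' p i : near_wall k p i -> near_wall k' p i -> k = k'.
Proof.
move=> [j near_j] [j' near_j'].
pose A : int := (k%:Z - k'%:Z - (j - j') * d.+1%:Z)%R.
have A_eq : A%:~R * (4 * N)%:R =
    (shift k p i - j%:~R * period%:R) - (shift k' p i - j'%:~R * period%:R) :> R.
  by rewrite /A /shift /period !intrD !intrN !intrM !natrM -!pmulrn; ring.
have A_lt : `|A%:~R : R| * (4 * N)%:R < 2 * N%:R.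
  rewrite -normr_nat -normrM A_eq; apply: le_lt_trans (ler_normB _ _) _.
  by rewrite mulr2n mulrDl mul1r ltrD.
have A0 : A = 0.
  have N_gt0R : 0 < N%:R :> R by rewrite ltr0n.
  have : `|A%:~R : R| < 1.
    by move: A_lt; rewrite natrM; have := normr_ge0 (A%:~R : R); nra.
  by rewrite -intr_norm -[1]/(1%:~R) ltr_int; lia.
apply: ord_inj; move: A0 (ltn_ord k) (ltn_ord k'); rewrite /A.
by case: (ltrgtP (j - j') 0) => ? *; nia.
Qed.

(* Pigeonhole: each of the [d] coordinates rules out at most one of the
   [d + 1] shifts. *)
Lemma exists_away p : exists k, away k p.
Proof.
apply/not_existsP => no_away.
have /fin_all_exists [g near_g] : forall k, exists i, near_wall k p i.
  move=> k; apply: contrapT => no_near; apply: (no_away k) => i near_i.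
  by apply: no_near; exists i.
have g_inj : injective g.
  by move=> k k' gkk'; apply: near_wall_uniq (near_g k) _; rewrite gkk'.
by have := leq_card _ g_inj; rewrite !card_ord ltnn.
Qed.

Lemma cell_range k p i :
  (0 <= Num.floor (d%:R * shift k p i) - (d * period)%:Z * block k p i
      <= (d * period)%:Z)%R.
Proof.
have d_gt0R : 0 < d%:R :> R by rewrite ltr0n (leq_ltn_trans (leq0n i) (ltn_ord i)).
have /andP [lo hi] := block_bounds k p i.
have floor_ge : ((d * period)%:Z * block k p i <= Num.floor (d%:R * shift k p i))%R.
  rewrite floor_ge_int intrM -pmulrn natrM.
  by have := ler_wpM2l (ltW d_gt0R) lo; lra.
have floor_lt : (Num.floor (d%:R * shift k p i)
    < (d * period)%:Z * block k p i + (d * period)%:Z)%R.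
  rewrite floor_lt_int intrD intrM -!pmulrn natrM.
  by move: hi; rewrite intrD -(ltr_pM2l d_gt0R); lra.
by apply/andP; split; lia.
Qed.

Lemma cell_coord_close k p q i : block k p = block k q -> cell k p = cell k q ->
  d%:R * `|p ord0 i - q ord0 i| < 1.
Proof.
move=> /(congr1 (fun b : {ffun _ -> _} => b i)) block_pq.
move=> /(congr1 (fun c : {ffun _ -> _} => val (c i))).
move: (cell_range k p i) (cell_range k q i) block_pq; rewrite !ffunE /=.
move=> /andP [p_lo p_hi] /andP [q_lo q_hi] block_pq.
rewrite inordK; last by lia.
rewrite inordK => [cell_pq|]; last by lia.
have floor_pq : Num.floor (d%:R * shift k p i) = Num.floor (d%:R * shift k q i).
  by move: cell_pq p_lo q_lo; rewrite block_pq; lia.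
have := floor_eq_dist_lt1 floor_pq.
by rewrite /shift -mulrBr normrM normr_nat opprD addrACA subrr addr0.
Qed.

End CubeLattice.

Section UnitBallGraph.
Variables (R : realType) (d : nat) (T : finType) (e : rel T) (f : T -> 'rV[R]_d).
Hypothesis f_ubg : forall x y, x != y -> (e x y <-> eucl_dist (f x) (f y) <= 1).

Lemma ubg_sym : symmetric e.
Proof.
move=> x y; case: (eqVneq x y) => [-> // | neq_xy].
have neq_yx : y != x by rewrite eq_sym.
by apply/idP/idP => [/(f_ubg neq_xy) | /(f_ubg neq_yx)]; rewrite eucl_distC => /f_ubg->.
Qed.

Lemma gdist_le_coord x y n i : gdist_le e x y n -> `|f x ord0 i - f y ord0 i| <= n%:R.
Proof.
case=> p [x_p <- size_p]; apply: le_trans (_ : (size p)%:R <= _); last by rewrite ler_nat.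
elim: p x x_p {size_p} => [|z p IHp] x /=; first by rewrite subrr normr0.
case/andP=> x_z z_p; apply: le_trans (ler_distD (f z ord0 i) _ _) _.
rewrite -natr1 [X in _ <= X]addrC lerD ?IHp //.
case: (eqVneq x z) => [-> | neq_xz]; first by rewrite subrr normr0.
by apply: le_trans (coord_le_eucl_dist _ _ _) _; apply/(f_ubg neq_xz).
Qed.

Lemma gdist_le1_of_eucl x y : eucl_dist (f x) (f y) <= 1 -> gdist_le e x y 1.
Proof.
case: (eqVneq x y) => [-> _ | neq_xy /(f_ubg neq_xy)]; last exact: gdist_le_edge.
exact: gdist_leW (gdist_le_refl _ _) _.
Qed.

Variable N : nat.
Hypothesis N_gt0 : (0 < N)%N.

Definition away_vertex k x := `[< away N k (f x) >].

Lemma block_connect k x y : connect (near e away_vertex N k) x y ->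
  block N k (f x) = block N k (f y).
Proof.
pose same_block := [pred z | block N k (f z) == block N k (f x)].
have closed_block : closed (near e away_vertex N k) same_block.
  move=> a b /and3P [/asboolP a_away /asboolP b_away /asboolP ab_near].
  rewrite -!topredE /= (block_eq N_gt0 a_away b_away) // => i.
  exact: gdist_le_coord ab_near.
by move=> /(closed_connect closed_block); rewrite -!topredE /= eqxx => /esym/eqP.
Qed.

Lemma gdist_le1_of_cell k x y : connect (near e away_vertex N k) x y ->
  cell N k (f x) = cell N k (f y) -> gdist_le e x y 1.
Proof.
move=> xy cell_xy; apply: gdist_le1_of_eucl; apply: eucl_dist_le1 => i.
exact: cell_coord_close (block_connect xy) cell_xy.
Qed.

End UnitBallGraph.

Theorem theorem6p3 (R : realType) (d : nat) : (1 <= d)%N ->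
  exists D : R -> R,
    (forall r : R, 0 < r -> 0 < D r) /\
    forall (T : finType) (e : rel T),
      @unit_ball_graph R d T e -> @control_function R d T e D.
Proof.
(* The bound does not need [1 <= d]. *)
move=> _.
pose N (r : R) := (Num.truncn r).+1.
pose C (r : R) := {ffun 'I_d -> 'I_(d * period d (N r)).+1}.
exists (fun r => (#|C r| * (N r).+1)%:R); split.
  by move=> r _; rewrite ltr0n muln_gt0 card_ffun !card_ord expn_gt0.
move=> T e [f f_ubg] r _.
exists (near_components e (away_vertex f (N r)) (N r)); split.
- apply: near_components_cover => x.
  have [k k_away] := @exists_away R d (N r) (ltn0Sn _) (f x).
  by exists k; apply/asboolP.
- move=> k; apply: (near_components_disjoint (ubg_sym f_ubg)) => m m_le_r.
  by apply/ltnW; rewrite -(ltr_nat R); apply: le_lt_trans m_le_r (truncnS_gt r).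
- move=> k; apply: (near_components_bounded (ubg_sym f_ubg) R
    (lab := fun x => cell (N r) k (f x))).
  by move=> x y; apply: gdist_le1_of_cell.
Qed.
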